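(* A multi-head HyTN $\mathcal{H}$ is consistent if and only if it is conservative, i.e. contains no negative cycle. Moreover, if all weights of $\mathcal{H}$ are integers, then $\mathcal{H}$ admits an integral feasible scheduling $s:V\to\mathbb{Z}$ if and only if it is conservative.
   Context: A multi-head HyTN is a pair $\mathcal{H}=(V,\mathcal{A})$, $V$ a finite node set, $\mathcal{A}$ a finite set of hyperarcs $A=(t_A,H_A,w_A)$ with tail $t_A\in V$, nonempty head set $H_A\subseteq V\setminus\{t_A\}$ and weights $w_A(v)\in\mathbb{R}$ for $v\in H_A$. A scheduling $s:V\to\mathbb{R}$ is feasible if $s(t_A)\ge\min_{v\in H_A}\{s(v)-w_A(v)\}$ for all $A\in\mathcal{A}$; $\mathcal{H}$ is consistent if a feasible scheduling exists. A cycle is a pair $(S,\mathcal{C})$ with $S\subseteq V$, $\mathcal{C}\subseteq\mathcal{A}$, such that $S=\bigcup_{A\in\mathcal{C}}(H_A\cup\{t_A\})\neq\emptyset$ and for every $v\in S$ there is a unique $A\in\mathcal{C}$ with $t_A=v$, denoted $a(v)$. A finite cyclic sequence is a sequence $v_1,\ldots,v_p$ of nodes of $S$ with $v_{t+1}\in H_{a(v_t)}$ for $1\le t<p$, $v_p=v_1$, and no other repeated node. The cycle is negative if every finite cyclic sequence satisfies $\sum_{t=1}^{p-1}w_{a(v_t)}(v_{t+1})<0$. $\mathcal{H}$ is conservative if it has no negative cycle. *)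

From HB Require Import structures.
From mathcomp Require Import all_boot all_order all_algebra.
Set Implicit Arguments. Unset Strict Implicit. Unset Printing Implicit Defensive.
Import Order.TTheory GRing.Theory Num.Theory.
Local Open Scope ring_scope.

(* A multi-head HyTN over node set V (finType) with hyperarcs indexed by a
   finType I: hyperarc A has tail t A, head set H A and weights w A v. *)
Definition wf_HyTN (V I : finType) (t : I -> V) (H : I -> {set V}) : Prop :=
  forall A : I, H A != set0 /\ t A \notin H A.

(* s(t_A) >= min_{v in H_A} (s v - w_A v), written as: some head attains it. *)
Definition feasible (R : numDomainType) (V I : finType) (t : I -> V)
  (H : I -> {set V}) (w : I -> V -> R) (s : V -> R) : Prop :=
  forall A : I, exists2 v, v \in H A & s v - w A v <= s (t A).

Definition consistent (R : numDomainType) (V I : finType) (t : I -> V)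
  (H : I -> {set V}) (w : I -> V -> R) : Prop :=
  exists s : V -> R, feasible t H w s.

Definition is_cycle (V I : finType) (t : I -> V) (H : I -> {set V})
  (S : {set V}) (C : {set I}) : Prop :=
  [/\ S = \bigcup_(A in C) (t A |: H A), S != set0 &
      forall v, v \in S -> #|[set A in C | t A == v]| = 1].

(* A finite cyclic sequence v_1,...,v_{k+1},v_1 (the k+1 distinct nodes are
   c 0, ..., c k, successor taken cyclically); a i is the arc a(c i) of C with
   tail c i (unique since (S,C) is a cycle). *)
Definition cyclic_seq (V I : finType) (t : I -> V) (H : I -> {set V})
  (S : {set V}) (C : {set I}) (k : nat) (c : 'I_k.+1 -> V)
  (a : 'I_k.+1 -> I) : Prop :=
  [/\ injective c,
      forall i, c i \in S,
      forall i, a i \in C /\ t (a i) = c i &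
      forall i, c (ordS i) \in H (a i)].

Definition negative_cycle (R : numDomainType) (V I : finType) (t : I -> V)
  (H : I -> {set V}) (w : I -> V -> R) (S : {set V}) (C : {set I}) : Prop :=
  is_cycle t H S C /\
  forall (k : nat) (c : 'I_k.+1 -> V) (a : 'I_k.+1 -> I),
    cyclic_seq t H S C c a -> \sum_(i < k.+1) w (a i) (c (ordS i)) < 0.

Definition conservative (R : numDomainType) (V I : finType) (t : I -> V)
  (H : I -> {set V}) (w : I -> V -> R) : Prop :=
  forall S C, ~ negative_cycle t H w S C.

(* Feasibility forbids negative cycles: in a cycle, follow from every node its
   unique arc to a head realising the minimum.  This function has a cycle of
   nodes, a finite cyclic sequence along which each weight dominates the
   difference of the scheduling, so its total weight is nonnegative by
   telescoping.

   Conversely, schedule larger and larger sets of hyperarcs by induction.  Two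
   arcs with a common tail are handled by the pointwise minimum of schedulings
   of two smaller sets, one of them shifted so that both agree on that tail.  A
   head which is the tail of no arc can be lowered to satisfy every arc it
   heads.  Otherwise the arcs form a cycle; a cyclic sequence of nonnegative
   weight yields potentials on its nodes (prefix sums of its weights), and
   lowering them uniformly enough makes them compatible with a scheduling of
   the arcs away from the cycle.  Every value built stays in any additive
   subgroup containing the weights, which gives the integral version. *)

From HB Require Import structures.
From mathcomp Require Import all_boot all_order all_algebra.
From mathcomp Require Import lra.
From Stdlib Require Import Classical.
Set Implicit Arguments. Unset Strict Implicit. Unset Printing Implicit Defensive.
Import Order.TTheory GRing.Theory Num.Theory.

Lemma exists_fcycle_in (T : finType) (f : T -> T) (S : {pred T}) x0 :
  {homo f : x / x \in S} -> x0 \in S ->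
  exists k (c : 'I_k.+1 -> T),
    [/\ injective c, forall i, c i \in S & forall i, c (ordS i) = f (c i)].
Proof.
move=> fS x0S; have iter_inS n : iter n f x0 \in S by elim: n => //= n /fS.
have /trajectP[i lt_io iter_o] := looping_order f x0.
set x := iter i f x0 in iter_o.
have iter_order_x : iter (order f x) f x = x.
  apply: (all_iffLR orbitPcycle 3 4); exists (order f x0 - i).-1.
  by rewrite prednK ?subn_gt0 // -iterD subnK 1?ltnW.
have order_x : (order f x).-1.+1 = order f x := orderSpred f x.
exists (order f x).-1, (fun j => iter j f x); split.
- have lt_o (j : 'I_(order f x).-1.+1) : j < order f x by rewrite -[X in _ < X]order_x.
  by move=> j1 j2 /(congr1 (findex f x)); rewrite !findex_iter //; apply: val_inj.
- by move=> j; rewrite -iterD.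
- move=> j /=; rewrite -iterS; have := ltn_ord j; rewrite leq_eqVlt.
  case/orP => [/eqP ->|lt_j]; last by rewrite modn_small.
  by rewrite modnn order_x iter_order_x.
Qed.

Local Open Scope ring_scope.

Lemma telescope_ordS (R : zmodType) k (g : 'I_k.+1 -> R) :
  \sum_(i < k.+1) (g (ordS i) - g i) = 0.
Proof. by rewrite sumrB [X in _ - X](reindex_inj (@ordS_inj _)) subrr. Qed.

Lemma prefix_sum_ordS (R : numDomainType) k (F : 'I_k.+1 -> R) (i : 'I_k.+1) :
    0 <= \sum_j F j ->
  \sum_(j < k.+1 | (j < ordS i)%N) F j - F i <= \sum_(j < k.+1 | (j < i)%N) F j.
Proof.
move=> sum_ge0.
have sumS : \sum_(j < k.+1 | (j < i.+1)%N) F j = \sum_(j < k.+1 | (j < i)%N) F j + F i.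
  rewrite (bigD1 i) //= addrC; congr (_ + _); apply: eq_bigl => j.
  by rewrite ltnS ltn_neqAle andbC.
have /orP[/eqP i_max | lt_ik] : (i == k :> nat) || (i < k)%N by rewrite -leq_eqVlt -ltnS.
  have -> : ordS i = ord0 by apply: val_inj; rewrite /= i_max modnn.
  rewrite big_pred0 // sub0r -subr_ge0 opprK -sumS.
  by rewrite (eq_bigl xpredT) // => j; rewrite i_max ltn_ord.
by rewrite /= modn_small ?ltnS // sumS addrK.
Qed.

Section Hypernetwork.

Variables (V I : finType) (t : I -> V) (H : I -> {set V}).

Lemma feasible_conservative (R : numDomainType) (w : I -> V -> R) s :
  feasible t H w s -> conservative t H w.
Proof.
move=> feas S C [[defS /set0Pn[v0 v0S] arc_uniq] neg_cycle].
have arcP v : v \in S -> exists2 A, A \in C & t A = v.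
  move/arc_uniq/eqP/cards1P => [A arcs_v].
  by have := set11 A; rewrite -arcs_v inE => /andP[AC /eqP tA]; exists A.
have [A0 _ _] := arcP v0 v0S.
have /fin_all_exists2[arc arcC arc_tail] :
    forall v, exists2 A, v \in S -> A \in C & v \in S -> t A = v.
  move=> v; case: (boolP (v \in S)) => [/arcP[A AC tA]|_]; first by exists A.
  by exists A0.
have [head headH head_min] := fin_all_exists2 feas.
pose next v := head (arc v).
have nextS : {homo next : v / v \in S}.
  move=> v vS; rewrite defS; apply/bigcupP; exists (arc v); first exact: arcC.
  by rewrite inE headH orbT.
have [k [c [c_inj cS c_next]]] := exists_fcycle_in nextS v0S.
have c_cyc : cyclic_seq t H S C c (arc \o c).
  split=> // i; first by rewrite arcC // arc_tail.
  by rewrite c_next headH.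
have := neg_cycle k c (arc \o c) c_cyc; apply/negP; rewrite le_gtF //.
rewrite -[X in X <= _](telescope_ordS (s \o c)); apply: ler_sum => i _ /=.
by rewrite c_next lerBlDl -lerBlDr -[in leRHS](arc_tail _ (cS i)) head_min.
Qed.

Lemma tails_cycle (J : {set I}) :
    {in J &, injective t} ->
    (forall A v, A \in J -> v \in H A -> exists2 B, B \in J & t B = v) ->
    J != set0 ->
  is_cycle t H (t @: J) J.
Proof.
move=> t_inj heads_tails /set0Pn[A0 A0J]; split.
- apply/setP => v; apply/imsetP/bigcupP => [[A AJ ->] | [A AJ]].
    by exists A; rewrite ?setU11.
  by case/setU1P => [-> | /(heads_tails A v AJ)[B BJ <-]]; [exists A | exists B].
- by apply/set0Pn; exists (t A0); apply: imset_f.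
- move=> _ /imsetP[A AJ ->]; apply/eqP/cards1P; exists A; apply/setP => B.
  rewrite !inE; apply/andP/eqP => [[BJ /eqP tB] | ->]; first exact: t_inj.
  by rewrite AJ eqxx.
Qed.

Section Schedulable.

Variables (R : realDomainType) (w : I -> V -> R).

Definition feasible_on (J : {set I}) (s : V -> R) :=
  forall A, A \in J -> exists2 v, v \in H A & s v - w A v <= s (t A).

Definition avoiding (J : {set I}) (K : {set V}) :=
  [set A in J | (t A \notin K) && [disjoint H A & K]].

Lemma feasible_onS (J1 J2 : {set I}) s :
  J1 \subset J2 -> feasible_on J2 s -> feasible_on J1 s.
Proof. by move=> /subsetP sJ12 feas A /sJ12/feas. Qed.

Lemma feasible_onT s : feasible_on setT s -> feasible t H w s.
Proof. by move=> feas A; apply: feas; rewrite inE. Qed.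

Lemma feasible_on_shift J s c : feasible_on J s -> feasible_on J (fun v => s v + c).
Proof. by move=> feas A /feas[v vH le]; exists v => //; rewrite addrAC lerD2r. Qed.

Lemma feasible_on_min J1 J2 s1 s2 :
    feasible_on J1 s1 -> feasible_on J2 s2 ->
  feasible_on [set A | (A \in J1) && (s1 (t A) <= s2 (t A))
                    || (A \in J2) && (s2 (t A) <= s1 (t A))]
    (fun v => Num.min (s1 v) (s2 v)).
Proof.
move=> feas1 feas2 A; rewrite inE.
case/orP=> [/andP[/feas1[v vH le] le12] | /andP[/feas2[v vH le] le21]].
  by exists v; rewrite // (min_idPl le12); apply: le_trans le; rewrite lerD2r ge_min lexx.
by exists v; rewrite // (min_idPr le21); apply: le_trans le;
  rewrite lerD2r ge_min lexx orbT.
Qed.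

Lemma avoiding_proper (J : {set I}) (K : {set V}) A v :
  A \in J -> v \in t A |: H A -> v \in K -> avoiding J K \proper J.
Proof.
move=> AJ vA vK; apply/properP; split.
  by apply/subsetP => B; rewrite inE => /andP[].
exists A; rewrite // inE AJ /= negb_and negbK.
case/setU1P: vA => [<- | vH]; first by rewrite vK.
by apply/orP; right; apply/negP => /disjointFr/(_ vH); rewrite vK.
Qed.

Lemma feasible_on_glue (J : {set I}) (K : {set V}) sK s' M :
    (forall A, A \in J -> t A \in K ->
       exists2 v, v \in H A :&: K & sK v - w A v <= sK (t A)) ->
    feasible_on (avoiding J K) s' ->
    (forall A v, v \in H A :&: K -> sK v - w A v - s' (t A) <= M) ->
  feasible_on J (fun v => if v \in K then sK v - M else s' v).
Proof.
move=> feasK feas' bound A AJ; case: ifPn => [tAK | tAK].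
  by have [v /setIP[vH vK] le] := feasK A AJ tAK; exists v; rewrite // vK; lra.
have [HK | ] := boolP [disjoint H A & K].
  have [|v vH le] := feas' A; first by rewrite inE AJ tAK HK.
  by exists v; rewrite // (disjointFr HK vH).
rewrite -setI_eq0 => /set0Pn[v vHK]; have [vH vK] := setIP vHK.
by exists v; rewrite // vK; have := bound A v vHK; lra.
Qed.

Variable P : zmodClosed R.
Hypothesis weights_in : forall A v, v \in H A -> w A v \in P.

Definition schedulable J := exists2 s, feasible_on J s & forall v, s v \in P.

Lemma schedulable_glue (J : {set I}) (K : {set V}) sK :
    (forall A, A \in J -> t A \in K ->
       exists2 v, v \in H A :&: K & sK v - w A v <= sK (t A)) ->
    (forall v, sK v \in P) ->
  schedulable (avoiding J K) -> schedulable J.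
Proof.
move=> feasK PsK [s' feas' Ps'].
pose M := \big[Num.max/0]_(p : I * V | p.2 \in H p.1 :&: K)
            (sK p.2 - w p.1 p.2 - s' (t p.1)).
exists (fun v => if v \in K then sK v - M else s' v).
  apply: feasible_on_glue feasK feas' _ => A v vHK.
  exact: (@le_bigmax_cond _ _ _ 0 (A, v)).
have PM : M \in P.
  rewrite /M; elim/big_ind: _ => [|x y Px Py|[A v] /setIP[vH _]]; first exact: rpred0.
    by rewrite maxEle; case: ifP.
  by rewrite !rpredB ?weights_in.
by move=> v; case: ifP => _; rewrite ?rpredB.
Qed.

Hypothesis conservative_w : conservative t H w.

Section Induction_step.

Variable J : {set I}.
Hypothesis IH : forall J' : {set I}, J' \proper J -> schedulable J'.

Lemma schedulable_shared_tail A1 A2 :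
  A1 \in J -> A2 \in J -> A1 != A2 -> t A1 = t A2 -> schedulable J.
Proof.
move=> A1J A2J A12 tA12.
have [s1 feas1 Ps1] := IH (properD1 A1J).
have [s2 feas2 Ps2] : schedulable (J :\: [set B | (t B == t A1) && (B != A1)]).
  apply: IH; apply/properP; split; first exact: subsetDl.
  by exists A2; rewrite // !inE A2J tA12 eqxx eq_sym A12.
pose c := s1 (t A1) - s2 (t A1).
exists (fun v => Num.min (s1 v) (s2 v + c)); last first.
  have Pc : c \in P by rewrite rpredB.
  by move=> v; rewrite minEle; case: ifP => _; [exact: Ps1 | exact: rpredD].
move: (feasible_on_min feas1 (feasible_on_shift c feas2)); apply: feasible_onS.
apply/subsetP => A AJ; rewrite !inE AJ !andbT.
have s21 : s2 (t A1) + c = s1 (t A1) by rewrite addrC subrK.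
case: (eqVneq (t A) (t A1)) => [tA | tA] /=.
  by rewrite tA s21 lexx !andbT orbN.
have -> : A != A1 by apply: contraNneq tA => ->.
exact: le_total.
Qed.

Lemma schedulable_free_head A v :
  A \in J -> v \in H A -> (forall B, B \in J -> t B != v) -> schedulable J.
Proof.
move=> AJ vH v_free; apply: (@schedulable_glue J [set v] (fun _ => 0)).
- by move=> B BJ; rewrite inE => /eqP tB; have := v_free B BJ; rewrite tB eqxx.
- by move=> _; apply: rpred0.
- exact/IH/(avoiding_proper AJ (setU1r _ vH))/set11.
Qed.

Lemma schedulable_cycle :
    {in J &, injective t} ->
    (forall A v, A \in J -> v \in H A -> exists2 B, B \in J & t B = v) ->
    J != set0 ->
  schedulable J.
Proof.
move=> t_inj heads_tails J_neq0.
have [k [c [a [[c_inj _ a_arc c_head] sum_ge0]]]] : exists k c a,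
    cyclic_seq t H (t @: J) J c a /\ 0 <= \sum_(i < k.+1) w (a i) (c (ordS i)).
  apply: NNPP => no_seq; apply: (@conservative_w (t @: J) J).
  split=> [|k c a c_seq]; first exact: tails_cycle.
  by rewrite ltNge; apply/negP => ge0; apply: no_seq; exists k, c, a.
pose psum (n : nat) := \sum_(j < k.+1 | (j < n)%N) w (a j) (c (ordS j)).
pose sK v := if [pick i | c i == v] is Some i then psum i else 0.
have sKc i : sK (c i) = psum i.
  rewrite /sK; case: pickP => [j /eqP/c_inj -> // | no_i].
  by have := no_i i; rewrite eqxx.
apply: (@schedulable_glue J [set c i | i : 'I_k.+1] sK).
- move=> A AJ /imsetP[i _ tA]; have [aiJ tai] := a_arc i.
  have -> : A = a i by apply: t_inj; rewrite ?tai.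
  exists (c (ordS i)); first by rewrite inE c_head imset_f.
  by rewrite tai !sKc; apply: prefix_sum_ordS.
- move=> v; rewrite /sK; case: pickP => [i _ | _]; last exact: rpred0.
  by apply: rpred_sum => j _; apply: weights_in.
- have [a0J ta0] := a_arc ord0.
  by apply/IH/(avoiding_proper a0J (v := c ord0)); rewrite ?imset_f // ta0 setU11.
Qed.

End Induction_step.

Lemma conservative_schedulable J : schedulable J.
Proof.
have [n] := ubnP #|J|; elim: n J => // n IHn J le_Jn.
have IH (J' : {set I}) : J' \proper J -> schedulable J'.
  by move=> /proper_card lt_J'J; apply: IHn; apply: leq_trans lt_J'J le_Jn.
have [|t_inj] := boolP [exists A1 in J, exists A2 in J, (A1 != A2) && (t A1 == t A2)].
  case/exists_inP=> A1 A1J /exists_inP[A2 A2J /andP[A12 /eqP tA12]].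
  exact: (schedulable_shared_tail IH A1J A2J A12 tA12).
have [|heads_tails] := boolP [exists A in J, exists v in H A, [forall B in J, t B != v]].
  case/exists_inP=> A AJ /exists_inP[v vH /forall_inP v_free].
  exact: (schedulable_free_head IH AJ vH v_free).
have [->|J_neq0] := eqVneq J set0.
  by exists (fun _ => 0) => [A | _]; rewrite ?inE ?rpred0.
apply: schedulable_cycle IH _ _ J_neq0 => [A1 A2 A1J A2J tA12 | A v AJ vH].
  apply/eqP; apply: contraNT t_inj => A12; apply/exists_inP; exists A1 => //.
  by apply/exists_inP; exists A2; rewrite // A12 tA12 eqxx.
have /exists_inP[B BJ /eqP tB] : [exists B in J, t B == v]; last by exists B.
apply: contraNT heads_tails => no_tail; apply/exists_inP; exists A => //.
apply/exists_inP; exists v => //; apply/forall_inP => B BJ.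
by apply: contra no_tail => tB; apply/exists_inP; exists B.
Qed.

End Schedulable.

Lemma feasible_in_conservative (R : realDomainType) (w : I -> V -> R)
    (P : zmodClosed R) :
    (forall A v, v \in H A -> w A v \in P) ->
  (exists2 s, feasible t H w s & forall v, s v \in P) <-> conservative t H w.
Proof.
move=> Pw; split=> [[s /feasible_conservative //] | cons_w].
by have [s /feasible_onT] := conservative_schedulable Pw cons_w setT; exists s.
Qed.

End Hypernetwork.

Theorem mainTheorem6 (R : archiRealFieldType) (V I : finType) (t : I -> V)
  (H : I -> {set V}) (w : I -> V -> R) (wf : wf_HyTN t H) :
  (consistent t H w <-> conservative t H w) /\
  ((forall A v, v \in H A -> w A v \is a Num.int) ->
   ((exists s : V -> R, (forall v, s v \is a Num.int) /\ feasible t H w s)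
      <-> conservative t H w)).
Proof.
split=> [|int_w].
  rewrite -(feasible_in_conservative t (fun A v _ => num_real (w A v))).
  split=> [[s feas] | [s feas _]]; last by exists s.
  by exists s => // v; apply: num_real.
rewrite -(feasible_in_conservative t int_w).
by split=> [[s [int_s feas]] | [s feas int_s]]; exists s.
Qed.
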